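(* For any variety $\mathcal{V}$ of $\Omega$-algebras, the variety $\mathcal{V}^p$ is generated by the quasivariety $\mathcal{V}\circ\mathcal{S}$, i.e. $\mathcal{V}^p$ is the smallest variety containing $\mathcal{V}\circ\mathcal{S}$.
   Context: Standing conventions: $\Omega$-algebras are of a plural similarity type (no nullary operation symbols, at least one operation symbol of arity $\ge2$). $T_n$ is the set of $\Omega$-terms in $x_1,\dots,x_n$ in which all $n$ variables occur. An identity is regular if the same variables occur on both sides. $\mathcal{S}$ is the variety of $\Omega$-algebras satisfying all regular identities. $\mathcal{V}\circ\mathcal{S}$ is the class of $\Omega$-algebras $A$ having a congruence $\theta$ with $A/\theta\in\mathcal{S}$ and every $\theta$-class (a subalgebra) in $\mathcal{V}$. Prolongation: for an identity $\sigma$ of the form $u(y_1,\dots,y_n)=v(y_1,\dots,y_n)$ and $m\ge1$, $\sigma^p_m$ is the set of identities $u(r_1,\dots,r_n)=v(r_1,\dots,r_n)$ obtained by substituting $r_i(x_1,\dots,x_m)$ for $y_i$, with $r_i$ ranging over $T_m$; $\sigma^p=\bigcup_m\sigma^p_m$; $\Sigma^p=\bigcup_{\sigma\in\Sigma}\sigma^p$. $\mathcal{V}^p$ is the variety defined by $\mathrm{Id}(\mathcal{V})^p$, where $\mathrm{Id}(\mathcal{V})$ is the set of all identities holding in $\mathcal{V}$. *)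

From mathcomp Require Import all_boot.
From Stdlib Require Import ClassicalEpsilon.
Set Implicit Arguments. Unset Strict Implicit. Unset Printing Implicit Defensive.

Section UniversalAlgebra.
Variable Omega : Type.
Variable ar : Omega -> nat.

(* Terms over the variables x_1, x_2, ... (x_{i+1} is [Var i]). *)
Inductive term : Type :=
| Var : nat -> term
| Op : forall o : Omega, ('I_(ar o) -> term) -> term.
Arguments Op o a : clear implicits.

Fixpoint occurs (i : nat) (t : term) : Prop :=
  match t with
  | Var n => n = i
  | Op o a => exists j, occurs i (a j)
  end.

Fixpoint subst (s : nat -> term) (t : term) : term :=
  match t with
  | Var n => s n
  | Op o a => Op o (fun j => subst s (a j))
  end.

Definition in_T (m : nat) (t : term) : Prop := forall i, occurs i t <-> (i < m)%N.

Record alg : Type := Alg {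
  carrier :> Type;
  ops : forall o : Omega, ('I_(ar o) -> carrier) -> carrier }.
Arguments ops a o _ : clear implicits.

Fixpoint eval (A : alg) (e : nat -> A) (t : term) : A :=
  match t with
  | Var n => e n
  | Op o a => ops A o (fun j => eval e (a j))
  end.

Definition identity : Type := (term * term)%type.

Definition holds (A : alg) (s : identity) : Prop :=
  forall e : nat -> A, eval e s.1 = eval e s.2.

Definition Mod (Sigma : identity -> Prop) (A : alg) : Prop :=
  forall s, Sigma s -> holds A s.

Definition Id (K : alg -> Prop) (s : identity) : Prop :=
  forall A, K A -> holds A s.

Definition is_variety (K : alg -> Prop) : Prop :=
  exists Sigma : identity -> Prop, forall A, K A <-> Mod Sigma A.

Definition regular (s : identity) : Prop :=
  forall i, occurs i s.1 <-> occurs i s.2.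

Definition S_class : alg -> Prop := Mod regular.

Definition prolong_m (s : identity) (m : nat) (s' : identity) : Prop :=
  exists r : nat -> term,
    (forall i, occurs i s.1 \/ occurs i s.2 -> in_T m (r i)) /\
    s' = (subst r s.1, subst r s.2).

Definition prolongation (Sigma : identity -> Prop) (s' : identity) : Prop :=
  exists s, Sigma s /\ exists m, (0 < m)%N /\ prolong_m s m s'.

Definition Vp (V : alg -> Prop) : alg -> Prop := Mod (prolongation (Id V)).

Definition congruence (A : alg) (theta : A -> A -> Prop) : Prop :=
  [/\ (forall x, theta x x),
      (forall x y, theta x y -> theta y x),
      (forall x y z, theta x y -> theta y z -> theta x z) &
      (forall o (a b : 'I_(ar o) -> A),
          (forall j, theta (a j) (b j)) -> theta (ops A o a) (ops A o b))].

Section Quotient.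
Variables (A : alg) (theta : A -> A -> Prop).

Definition qcarrier : Type := {P : A -> Prop | exists a, P = theta a}.

Definition qclass (a : A) : qcarrier := exist _ (theta a) (ex_intro _ a erefl).

Definition qrepr (q : qcarrier) : A :=
  proj1_sig (constructive_indefinite_description _ (proj2_sig q)).

Definition quot : alg :=
  @Alg qcarrier (fun o qs => qclass (ops A o (fun j => qrepr (qs j)))).
End Quotient.

Section ClassSubalgebra.
Variables (A : alg) (theta : A -> A -> Prop) (c : A).

Definition class_closed : Prop :=
  forall o (a : 'I_(ar o) -> A), (forall j, theta c (a j)) -> theta c (ops A o a).

Definition subalg (H : class_closed) : alg :=
  @Alg {x : A | theta c x}
    (fun o a => exist _ (ops A o (fun j => proj1_sig (a j)))
                        (H o (fun j => proj1_sig (a j)) (fun j => proj2_sig (a j)))).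
End ClassSubalgebra.

Definition VcircS (V : alg -> Prop) (A : alg) : Prop :=
  exists theta : A -> A -> Prop,
    [/\ congruence theta,
        S_class (quot theta) &
        forall c : A, exists H : class_closed theta c, V (subalg H)].

Definition plural : Prop :=
  (forall o, (0 < ar o)%N) /\ exists o, (2 <= ar o)%N.

End UniversalAlgebra.

(* A prolonged identity u(r_1,...,r_n) = v(r_1,...,r_n), all r_i in T_m,
   holds in every algebra A of V o S: for any valuation all values of the r_i
   lie in one theta-class, since r_i = r_k is a regular identity and hence
   holds in A/theta; that class is a member of V, so u = v holds there.

   Conversely, let F be the free algebra of V^p.  Its identities are regular,
   because the two-element semilattice satisfies every prolonged identity, so
   "the representatives have the same variables" is a well-defined congruence
   on F.  Its quotient satisfies all regular identities, and each class lies
   in V: substituting terms over one fixed finite set X of variables into an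
   identity of V gives, after renaming X to x_1, ..., x_|X|, a prolongation.
   Hence F is in V o S, and a variety containing V o S contains F and so all
   of V^p. *)

From Pilot Require Import Defs.
From Stdlib Require Import FunctionalExtensionality ProofIrrelevance
  PropExtensionality ClassicalEpsilon EqdepFacts.
From mathcomp Require Import all_boot.
Set Implicit Arguments. Unset Strict Implicit. Unset Printing Implicit Defensive.

Section Terms.
Variables (Omega : Type) (ar : Omega -> nat).
Notation term := (term ar).
Notation Var := (Var ar).

Lemma eval_subst (A : alg ar) (e : nat -> A) s (t : term) :
  eval e (subst s t) = eval (fun i => eval e (s i)) t.
Proof.
elim: t => [n|o a IH] //=; congr (ops _).
by apply: functional_extensionality => j; exact: IH.
Qed.

Lemma eq_eval (A : alg ar) (e e' : nat -> A) (t : term) :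
  (forall i, occurs i t -> e i = e' i) -> eval e t = eval e' t.
Proof.
elim: t => [n|o a IH] /= H; first exact: H.
congr (ops _); apply: functional_extensionality => j.
by apply: IH => i Hi; apply: H; exists j.
Qed.

Lemma occurs_subst i s (t : term) :
  occurs i (subst s t) <-> exists k, occurs k t /\ occurs i (s k).
Proof.
elim: t => [n|o a IH] /=.
  by split=> [h|[k [-> h]]]; first exists n.
split=> [[j /IH [k [h1 h2]]]|[k [[j h1] h2]]].
  by exists k; split=> //; exists j.
by exists j; apply/IH; exists k.
Qed.

Lemma subst_Var (t : term) : subst Var t = t.
Proof.
elim: t => [n|o a IH] //=; congr Op.
by apply: functional_extensionality => j; exact: IH.
Qed.

Lemma term_has_var (ar_gt0 : forall o, 0 < ar o) (t : term) :
  exists i, occurs i t.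
Proof.
elim: t => [n|o a IH] /=; first by exists n.
have [i Hi] := IH (Ordinal (ar_gt0 o)).
by exists i, (Ordinal (ar_gt0 o)).
Qed.

Fixpoint vars (t : term) : seq nat :=
  match t with
  | Defs.Var n => [:: n]
  | Op o a => flatten [seq vars (a j) | j <- enum 'I_(ar o)]
  end.

Lemma mem_vars i (t : term) : i \in vars t <-> occurs i t.
Proof.
elim: t => [n|o a IH] /=; first by rewrite inE; split=> [/eqP|->].
split=> [/flattenP [l /mapP [j _ ->] /IH h]|[j /IH hj]]; first by exists j.
by apply/flattenP; exists (vars (a j)) => //; apply/mapP; exists j; rewrite ?mem_enum.
Qed.

Definition term_alg : alg ar := @Alg _ _ term (fun o a => Op a).

Lemma eval_term_alg s (t : term) : eval (A := term_alg) s t = subst s t.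
Proof.
elim: t => [n|o a IH] //=; congr Op.
by apply: functional_extensionality => j; exact: IH.
Qed.

End Terms.

Section Quotient.
Variables (Omega : Type) (ar : Omega -> nat).
Variables (A : alg ar) (theta : A -> A -> Prop).
Hypothesis theta_congr : congruence theta.

Lemma qclass_eq a b : theta a b -> qclass theta a = qclass theta b.
Proof.
case: theta_congr => _ Hs Ht _ h; apply: ProofIrrelevanceTheory.subset_eq_compat.
apply: functional_extensionality => x.
by apply: propositional_extensionality; split; eauto.
Qed.

Lemma qclass_inj a b : qclass theta a = qclass theta b -> theta a b.
Proof.
case: theta_congr => Hr _ _ _ /(f_equal (@proj1_sig _ _)) /= ->; exact: Hr.
Qed.

Lemma qreprK (q : qcarrier theta) : qclass theta (qrepr q) = q.
Proof.
case: q => P h; rewrite /qrepr /qclass /=.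
case: (constructive_indefinite_description _ h) => b Hb /=.
exact: ProofIrrelevanceTheory.subset_eq_compat.
Qed.

Lemma qrepr_qclass a : theta (qrepr (qclass theta a)) a.
Proof.
case: theta_congr => Hr Hs _ _; rewrite /qrepr /=.
case: (constructive_indefinite_description _ _) => b /= Hb.
by apply: Hs; rewrite Hb; exact: Hr.
Qed.

Lemma eval_quot (e : nat -> A) (t : term ar) :
  eval (A := quot theta) (fun i => qclass theta (e i)) t = qclass theta (eval e t).
Proof.
elim: t => [n|o a IH] //=; apply: qclass_eq.
case: theta_congr => _ _ _; apply=> j; rewrite IH; exact: qrepr_qclass.
Qed.

Lemma holds_quotP (t t' : term ar) :
  holds (quot theta) (t, t') <-> forall e : nat -> A, theta (eval e t) (eval e t').
Proof.
split=> [h e|h e]; first by apply: qclass_inj; rewrite -!eval_quot; exact: h.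
have -> : e = fun i => qclass theta (qrepr (e i)).
  by apply: functional_extensionality => i; rewrite qreprK.
by rewrite /= !eval_quot; apply: qclass_eq.
Qed.

End Quotient.

Section ClassSubalgebra.
Variables (Omega : Type) (ar : Omega -> nat).
Variables (A : alg ar) (theta : A -> A -> Prop) (c : A).
Hypothesis closed_c : class_closed theta c.

Lemma val_eval_subalg (e : nat -> subalg closed_c) (t : term ar) :
  proj1_sig (eval e t) = eval (fun i => proj1_sig (e i)) t.
Proof.
elim: t => [n|o a IH] //=; congr (ops _).
by apply: functional_extensionality => j; exact: IH.
Qed.

Lemma subalg_valuation (P : nat -> Prop) (f : nat -> A) :
  theta c c -> (forall i, P i -> theta c (f i)) ->
  exists e : nat -> subalg closed_c, forall i, P i -> proj1_sig (e i) = f i.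
Proof.
move=> cc Hf.
exists (fun i => match excluded_middle_informative (theta c (f i)) with
                 | left h => exist _ (f i) h
                 | right _ => exist _ c cc end) => i Pi.
by case: excluded_middle_informative => // -[]; exact: Hf.
Qed.

End ClassSubalgebra.

Section Semilattice.
Variables (Omega : Type) (ar : Omega -> nat).

Definition bool_semilattice : alg ar := @Alg _ _ bool (fun o a => [forall j, a j]).

Lemma eval_bool_semilattice (e : nat -> bool) (t : term ar) :
  eval (A := bool_semilattice) e t <-> (forall i, occurs i t -> e i).
Proof.
elim: t => [n|o a IH] /=; first by split=> [h i <-|]; last apply.
split=> [/forallP h i [j hj]|h]; first exact: (proj1 (IH j) (h j)).
by apply/forallP => j; apply/IH => i hi; apply: h; exists j.
Qed.

Lemma holds_semilattice_regular (s : identity ar) :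
  holds bool_semilattice s <-> regular s.
Proof.
case: s => t t'; split=> [h k|h e] /=.
  have notin (w : term ar) :
      eval (A := bool_semilattice) (fun i => i != k) w <-> ~ occurs k w.
    rewrite eval_bool_semilattice; split=> [H /H|H i Hi]; first by rewrite eqxx.
    by apply/eqP => Eik; apply: H; rewrite -Eik.
  have := notin t; have := notin t'; rewrite /= (h (fun i => i != k)) /=.
  by split=> Ho; apply: NNPP; tauto.
apply/idP/idP => /eval_bool_semilattice H;
  by apply/eval_bool_semilattice => i /h /H.
Qed.

Lemma prolongation_regular (ar_gt0 : forall o, 0 < ar o)
    (Sigma : identity ar -> Prop) (s : identity ar) :
  prolongation Sigma s -> regular s.
Proof.
move=> [[u v] [_ [m [_ [r [Hr ->]]]]]] j /=.
have occurs_lt (w : term ar) : (forall i, occurs i w -> in_T m (r i)) ->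
    occurs j (subst r w) <-> j < m.
  move=> Hw; rewrite occurs_subst; split=> [[k [hk /(Hw k hk)]] //|hj].
  by have [k hk] := term_has_var ar_gt0 w; exists k; split=> //; apply/(Hw k hk).
rewrite !occurs_lt // => i hi; apply: Hr; tauto.
Qed.

Lemma Vp_semilattice (ar_gt0 : forall o, 0 < ar o) (V : alg ar -> Prop) :
  Vp V bool_semilattice.
Proof.
by move=> s /(prolongation_regular ar_gt0) /holds_semilattice_regular.
Qed.

End Semilattice.

Section Prolongation.
Variables (Omega : Type) (ar : Omega -> nat) (ar_gt0 : forall o, 0 < ar o).
Variable V : alg ar -> Prop.

Lemma VcircS_Vp A : VcircS V A -> Vp V A.
Proof.
move=> [th [th_congr quot_S class_V]] s [[u v] [uv_Id [m [_ [r [Hr ->]]]]]] e /=.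
have [k hk] := term_has_var ar_gt0 u.
pose c := eval e (r k).
have [closed_c c_V] := class_V c.
have same_class i : occurs i u \/ occurs i v -> th c (eval e (r i)).
  move=> hi; have reg_ki : regular (r k, r i).
    by move=> j /=; rewrite (Hr k (or_introl hk) j) (Hr i hi j).
  exact: (proj1 (holds_quotP th_congr _ _) (quot_S _ reg_ki)).
have [eB HeB] := subalg_valuation closed_c (let: And4 refl _ _ _ := th_congr in refl c)
  same_class.
have val_eB (w : term ar) : (forall i, occurs i w -> occurs i u \/ occurs i v) ->
    proj1_sig (eval eB w) = eval e (subst r w).
  move=> Hw; rewrite val_eval_subalg eval_subst.
  by apply: eq_eval => i /Hw; exact: HeB.
rewrite -!val_eB; [|by move=> i; right|by move=> i; left].
by rewrite (uv_Id _ c_V eB).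
Qed.

Definition eqVp (t t' : term ar) : Prop := Id (Vp V) (t, t').

Lemma eqVp_congruence : congruence (A := term_alg ar) eqVp.
Proof.
split=> [x B _ e //|x y h B HB e|x y z h1 h2 B HB e|o a b h B HB e /=].
- by symmetry; apply: h.
- by rewrite (h1 B HB e) (h2 B HB e).
- congr (ops _); apply: functional_extensionality => j; exact: (h j B HB e).
Qed.

Lemma Id_Vp_regular s : Id (Vp V) s -> regular s.
Proof. by move=> h; apply/holds_semilattice_regular/h/Vp_semilattice. Qed.

Definition free_Vp : alg ar := quot (A := term_alg ar) eqVp.

Notation fclass := (qclass (A := term_alg ar) eqVp).

Lemma eval_free_Vp (e : nat -> free_Vp) t :
  eval e t = fclass (subst (fun i => qrepr (e i)) t).
Proof.
have {1}-> : e = fun i => fclass (qrepr (e i)).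
  by apply: functional_extensionality => i; rewrite qreprK.
by rewrite (eval_quot eqVp_congruence) eval_term_alg.
Qed.

Definition occursF (q : free_Vp) i : Prop := occurs i (qrepr q).

Lemma occursF_fclass t i : occursF (fclass t) i <-> occurs i t.
Proof. exact: (Id_Vp_regular (qrepr_qclass eqVp_congruence t) i). Qed.

Definition same_vars (q q' : free_Vp) : Prop := forall i, occursF q i <-> occursF q' i.

Lemma same_vars_congruence : congruence same_vars.
Proof.
split=> [x i //|x y h i|x y z h1 h2 i|o a b h i]; first by split=> /h.
  by rewrite (h1 i) (h2 i).
rewrite /= !occursF_fclass /=.
by split=> -[j hj]; exists j; apply/(h j).
Qed.

(* Renaming the variables of t0 to x_1, ..., x_m turns each s i into a term
   of T_m, and the substitution into a prolongation. *)
Lemma subst_Id_prolong (t0 : term ar) (s : nat -> term ar) u v :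
  (forall i j, occurs j t0 <-> occurs j (s i)) ->
  Id V (u, v) -> eqVp (subst s u) (subst s v).
Proof.
move=> Hs uv_Id B HB e.
pose l := undup (vars t0).
have mem_l j : j \in l <-> occurs j t0 by rewrite mem_undup mem_vars.
pose r i := subst (fun k => Var ar (index k l)) (s i).
have r_T i : in_T (size l) (r i).
  move=> j; rewrite occurs_subst; split=> [[k [/(Hs i k)/mem_l hk /= <-]]|hj].
    by rewrite index_mem.
  exists (nth 0 l j); split; last by rewrite /= index_uniq // undup_uniq.
  by apply/(Hs i)/mem_l; exact: mem_nth.
have l_gt0 : 0 < size l.
  by have [k /mem_l] := term_has_var ar_gt0 t0; case: (l).
have eval_r i : eval (fun j => e (nth 0 l j)) (r i) = eval e (s i).
  rewrite eval_subst; apply: eq_eval => k /(Hs i k)/mem_l hk.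
  by rewrite /= nth_index.
have := HB (subst r u, subst r v) _ (fun j => e (nth 0 l j)).
rewrite /= !eval_subst (functional_extensionality _ _ eval_r); apply.
by exists (u, v); split=> //; exists (size l); split=> //; exists r.
Qed.

Hypothesis V_variety : is_variety V.

Lemma free_Vp_VcircS : VcircS V free_Vp.
Proof.
exists same_vars; split; first exact: same_vars_congruence.
  move=> [p q] reg_pq; apply/(holds_quotP same_vars_congruence) => e i.
  rewrite !eval_free_Vp !occursF_fclass !occurs_subst.
  by split=> -[k [/reg_pq hk h]]; exists k.
move=> c; have closed_c : class_closed same_vars c.
  move=> o a h i; rewrite /same_vars occursF_fclass /=.
  split=> [hi|[j /(h j i)] //]; exists (Ordinal (ar_gt0 o)); exact/(h _ i).
exists closed_c; have [SV HSV] := V_variety; apply/HSV => -[u v] uv_SV eB /=.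
apply: (eq_sig_hprop (fun _ => proof_irrelevance _)).
rewrite (val_eval_subalg eB u) (val_eval_subalg eB v) !eval_free_Vp.
apply: (qclass_eq eqVp_congruence).
apply: (subst_Id_prolong (t0 := qrepr c)) => [i j|A /HSV]; last exact.
exact: (proj2_sig (eB i) j).
Qed.

Lemma Id_free_Vp s : holds free_Vp s -> Id (Vp V) s.
Proof.
case: s => u v /(holds_quotP eqVp_congruence) /(_ (Var ar)).
by rewrite !eval_term_alg !subst_Var.
Qed.

Lemma Vp_sub_variety W :
  is_variety W -> (forall A, VcircS V A -> W A) -> forall A, Vp V A -> W A.
Proof.
move=> [SW HW] VcircS_W A A_Vp; apply/HW => s /(proj1 (HW _) (VcircS_W _ free_Vp_VcircS)).
by move/Id_free_Vp; apply.
Qed.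

End Prolongation.

Theorem corollary3p4 (Omega : Type) (ar : Omega -> nat) (Hpl : plural ar)
  (V : alg ar -> Prop) (HV : is_variety V) :
  is_variety (Vp V) /\
  (forall A, VcircS V A -> Vp V A) /\
  (forall W : alg ar -> Prop, is_variety W ->
     (forall A, VcircS V A -> W A) -> forall A, Vp V A -> W A).
Proof.
have ar_gt0 := proj1 Hpl.
split; first by exists (prolongation (Id V)).
split; first exact: VcircS_Vp.
exact: Vp_sub_variety.
Qed.
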